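(* Let $S\subseteq\Sigma^n$ be a double-MDS-code with canonical parameters $k$ and $\{K_1,\ldots,K_k\}$, $n_j=|K_j|$, and let $C\subseteq S$ be an $(n,2)_4$ MDS code. (a) If $2<k<n$, or if $k=2$ with $n_1>1$ and $n_2>1$, then $C$ is decomposable. (b) If $k=n$, then $C$ is semilinear.
   Context: Let $\Sigma=\{0,1,2,3\}$, $[n]=\{1,\ldots,n\}$. An $i$-line of $\Sigma^n$ is a set of the four words that agree in all coordinates except the $i$th; a line is an $i$-line for some $i$. An $(n,2)_4$ MDS code is a set $C\subseteq\Sigma^n$ meeting every line in exactly one element. A double-code is a set meeting every line in $0$ or $2$ elements; a double-MDS-code is a set meeting every line in exactly $2$ elements; a double-code is complementable if contained in a double-MDS-code, and prime if complementable, nonempty and not partitionable into two or more nonempty double-codes. An $n$-quasigroup is a map $g:\Sigma^n\to\Sigma$ such that, for each $i$ and each fixing of the other arguments, $x_i\mapsto g(\bar x)$ is a bijection of $\Sigma$. $\chi_S$ denotes the characteristic function, $\oplus$ addition mod 2, and for $K=\{i_1<\cdots<i_m\}\subseteq[n]$, $\bar x_K=(x_{i_1},\ldots,x_{i_m})$. A double-MDS-code $D\subseteq\Sigma^m$ is linear if $\chi_D(y_1,\ldots,y_m)=\chi_1(y_1)\oplus\cdots\oplus\chi_m(y_m)$ for some $\chi_i:\Sigma\to\{0,1\}$; an MDS code is semilinear if it is contained in some linear double-MDS-code. An $(n,2)_4$ MDS code $C$ is decomposable if there are $m\in\{2,\ldots,n-2\}$, an $m$-quasigroup $g'$, an $(n-m)$-quasigroup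 $g''$ and a permutation $\sigma$ of $[n]$ with $C=\{\bar x: g'(x_{\sigma(1)},\ldots,x_{\sigma(m)})=g''(x_{\sigma(m+1)},\ldots,x_{\sigma(n)})\}$. Canonical parameters: every double-MDS-code $S\subseteq\Sigma^n$ has a unique representation $\chi_S(\bar x)=\bigoplus_{j=1}^k\chi_{S_j}(\bar x_{K_j})\oplus\sigma_0$ with $k\in[n]$, $\{K_1,\ldots,K_k\}$ a partition of $[n]$ into nonempty sets, $S_j\subseteq\Sigma^{|K_j|}$ prime double-MDS-codes containing $\bar 0$, and $\sigma_0\in\{0,1\}$; $k$ and $\{K_j\}$ are the canonical parameters of $S$. *)

From mathcomp Require Import all_boot all_order all_fingroup.
Set Implicit Arguments. Unset Strict Implicit. Unset Printing Implicit Defensive.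

Definition word (m : nat) := {ffun 'I_m -> 'I_4}.

Definition upd m (x : word m) (i : 'I_m) (a : 'I_4) : word m :=
  [ffun j => if j == i then a else x j].

Definition line m (x : word m) (i : 'I_m) : {set word m} :=
  [set y : word m | [forall j : 'I_m, (j != i) ==> (y j == x j)]].

Definition MDS_code m (C : {set word m}) : Prop :=
  forall (x : word m) (i : 'I_m), #|C :&: line x i| = 1.

Definition double_code m (S : {set word m}) : Prop :=
  forall (x : word m) (i : 'I_m), #|S :&: line x i| = 0 \/ #|S :&: line x i| = 2.

Definition double_MDS_code m (S : {set word m}) : Prop :=
  forall (x : word m) (i : 'I_m), #|S :&: line x i| = 2.

Definition complementable m (S : {set word m}) : Prop :=
  double_code S /\ exists D : {set word m}, double_MDS_code D /\ S \subset D.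

Definition prime_code m (S : {set word m}) : Prop :=
  complementable S /\ S != set0 /\
  ~ (exists P : {set {set word m}},
        partition P S /\ 2 <= #|P| /\
        forall T, T \in P -> T != set0 /\ double_code T).

Definition zero_word m : word m := [ffun => ord0].

(* \bar x_K : the subword of x on K, coordinates in increasing order
   (enum of a set of ordinals lists it increasingly) *)
Definition subword m (x : word m) (K : {set 'I_m}) : word #|K| :=
  [ffun t => x (enum_val t)].

(* S has canonical parameters k and {K_j}: the (unique) representation
   chi_S(x) = (+)_j chi_{S_j}(x_{K_j}) (+) sigma0 with K a partition of [n]
   into k nonempty sets and S_j prime double-MDS-codes containing 0. *)
Definition canonical_repr n (S : {set word n}) (k : nat) (K : 'I_k -> {set 'I_n})
  (Sj : forall j : 'I_k, {set word #|K j|}) (sigma0 : bool) : Prop :=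
  [/\ 1 <= k <= n,
      (forall j, K j != set0) /\
      (forall j1 j2, j1 != j2 -> [disjoint K j1 & K j2]),
      (forall i : 'I_n, exists j, i \in K j),
      (forall j, double_MDS_code (Sj j) /\ prime_code (Sj j) /\ zero_word _ \in Sj j)
    & forall x : word n,
        (x \in S) = (\big[addb/false]_(j < k) (subword x (K j) \in Sj j)) (+) sigma0].

Definition has_canonical_parameters n (S : {set word n}) (k : nat)
  (K : 'I_k -> {set 'I_n}) : Prop :=
  exists (Sj : forall j : 'I_k, {set word #|K j|}) (sigma0 : bool),
    @canonical_repr n S k K Sj sigma0.

Definition quasigroup m (g : word m -> 'I_4) : Prop :=
  forall (x : word m) (i : 'I_m), injective (fun a => g (upd x i a)).

Definition decomposable n (C : {set word n}) : Prop :=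
  exists (m : nat) (Hm : m <= n), 2 <= m <= n - 2 /\
  exists (g1 : word m -> 'I_4) (g2 : word (n - m) -> 'I_4) (sigma : {perm 'I_n}),
    [/\ quasigroup g1, quasigroup g2 &
        C = [set x : word n |
               g1 [ffun t : 'I_m => x (sigma (widen_ord Hm t))] ==
               g2 [ffun t : 'I_(n - m) => x (sigma (cast_ord (subnKC Hm) (rshift m t)))]]].

Definition linear_code m (D : {set word m}) : Prop :=
  exists chi : 'I_m -> 'I_4 -> bool,
    forall y : word m, (y \in D) = \big[addb/false]_(i < m) chi i (y i).

Definition semilinear n (C : {set word n}) : Prop :=
  exists D : {set word n}, [/\ double_MDS_code D, linear_code D & C \subset D].

From mathcomp Require Import all_boot all_order all_fingroup zify.
Set Implicit Arguments. Unset Strict Implicit. Unset Printing Implicit Defensive.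

(* Let K be a block of the canonical decomposition, A its prime double-MDS code,
   so that chi_S(x) = chi_A(x_K) (+) beta(x) with beta not depending on x_K.
   Fixing the coordinates z outside K cuts out of C an MDS code [slice z] lying
   in A or in ~: A according to beta z.  Both are indecomposable double codes
   (for ~: A by a "plane" argument), and the words where two MDS subcodes agree
   form a double code, so two slices in the same layer are equal or
   complementary there.  Hence membership of a word w in every slice is that of
   one point [ref a] of a fixed line, and x \in C iff inner x_K = outer x: a
   decomposition once |K| >= 2 and n - |K| >= 2, which some block achieves in
   case (a).  If k = n every block is a singleton, so S is itself linear. *)

Section Lines.
Variable m : nat.
Implicit Types (x y : word m) (i j : 'I_m) (a b : 'I_4) (X : {set word m}).

Lemma upd_eq x i a : upd x i a i = a.
Proof. by rewrite ffunE eqxx. Qed.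

Lemma upd_neq x i a j : j != i -> upd x i a j = x j.
Proof. by rewrite ffunE => /negbTE ->. Qed.

Lemma upd_id x i : upd x i (x i) = x.
Proof. by apply/ffunP=> j; rewrite ffunE; case: eqP => // ->. Qed.

Lemma upd_upd x i a b : upd (upd x i a) i b = upd x i b.
Proof. by apply/ffunP=> j; rewrite !ffunE; case: eqP. Qed.

Lemma upd_comm x i j a b : i != j -> upd (upd x i a) j b = upd (upd x j b) i a.
Proof.
move=> ij; apply/ffunP=> l; rewrite !ffunE.
by case: (eqVneq l j) => [->|//]; rewrite eq_sym (negbTE ij).
Qed.

Lemma upd_inj x i : injective (upd x i).
Proof. by move=> a b /(congr1 (fun y => y i)); rewrite !upd_eq. Qed.

Lemma line_eq x i : line x i = [set upd x i a | a : 'I_4].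
Proof.
apply/setP=> y; rewrite inE; apply/forallP/imsetP => [yx|[a _ ->] j].
  exists (y i) => //; apply/ffunP=> j; rewrite ffunE.
  by case: eqP => [->//|/eqP ji]; apply/eqP; rewrite (implyP (yx j)).
by rewrite ffunE; apply/implyP=> /negbTE->.
Qed.

Definition line_card X x i := #|[set a | upd x i a \in X]|.

Lemma card_setI_line X x i : #|X :&: line x i| = line_card X x i.
Proof.
rewrite /line_card -(card_imset _ (@upd_inj x i)) line_eq; apply: eq_card => y.
rewrite inE; apply/andP/imsetP => [[yX /imsetP[a _ ya]]|[a aX ->]].
  by exists a; rewrite // inE -ya.
by move: aX; rewrite inE; split=> //; apply: imset_f.
Qed.

Lemma line_cardC X x i : line_card (~: X) x i = 4 - line_card X x i.
Proof.
rewrite /line_card; have -> : [set a | upd x i a \in ~: X] = ~: [set a | upd x i a \in X].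
  by apply/setP=> a; rewrite !inE.
by rewrite cardsCs setCK card_ord.
Qed.

End Lines.

Lemma MDS_code_line_card m (C : {set word m}) :
  MDS_code C <-> forall x i, line_card C x i = 1.
Proof. by split=> H x i; move: (H x i); rewrite card_setI_line. Qed.

Lemma double_MDS_code_line_card m (C : {set word m}) :
  double_MDS_code C <-> forall x i, line_card C x i = 2.
Proof. by split=> H x i; move: (H x i); rewrite card_setI_line. Qed.

Lemma double_code_line_card m (C : {set word m}) :
  double_code C <-> forall x i, line_card C x i = 0 \/ line_card C x i = 2.
Proof. by split=> H x i; move: (H x i); rewrite card_setI_line. Qed.

Section PredCard.
Variables (T : finType) (P : pred T).

Lemma card_pred_eq1P : #|[set a | P a]| = 1 -> exists a, forall b, P b = (b == a).
Proof. by move/eqP/cards1P=> [a /setP Ha]; exists a => b; move: (Ha b); rewrite !inE. Qed.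

Lemma card_pred_eq2P : #|[set a | P a]| = 2 ->
  exists a b, a != b /\ forall c, P c = (c == a) || (c == b).
Proof.
move/eqP/cards2P=> [a [b [ab /setP Ha]]]; exists a, b; split=> // c.
by move: (Ha c); rewrite !inE.
Qed.

Lemma card_pred_eq0 : (forall c, P c = false) -> #|[set c | P c]| = 0.
Proof.
by move=> H; apply/eqP; rewrite cards_eq0; apply/eqP/setP=> c; rewrite !inE H.
Qed.

Lemma card_pred_eq2 a b : a != b ->
  (forall c, P c = (c == a) || (c == b)) -> #|[set c | P c]| = 2.
Proof.
move=> ab H; suff -> : [set c | P c] = [set a; b] by rewrite cards2 ab.
by apply/setP=> c; rewrite !inE H.
Qed.

End PredCard.

Lemma MDS_code_upd_inj m (C : {set word m}) x i a b : MDS_code C ->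
  upd x i a \in C -> upd x i b \in C -> a = b.
Proof.
move=> /MDS_code_line_card/(_ x i)/card_pred_eq1P[c Cc].
by rewrite !Cc => /eqP-> /eqP->.
Qed.

Lemma prime_code_split m (A T : {set word m}) : prime_code A -> T \subset A ->
  double_code T -> double_code (A :\: T) -> T = set0 \/ T = A.
Proof.
move=> [_ [_ nsplit]] TA dT dAT.
have [->|T0] := eqVneq T set0; first by left.
have [AT0|AT0] := eqVneq (A :\: T) set0.
  by right; apply/eqP; rewrite eqEsubset TA /= -setD_eq0 AT0.
exfalso; apply: nsplit; exists [set T; A :\: T].
have TAT : T != A :\: T.
  apply: contraNneq T0 => eTAT; apply/eqP/setP=> x; rewrite inE.
  by apply/negP=> xT; move: (xT); rewrite {1}eTAT inE xT.
split; last split.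
- apply/and3P; split.
  + by rewrite /cover big_setU1 ?inE //= big_set1 -{1}(setIidPr TA) setID.
  + have dTAT : [disjoint T & A :\: T] by rewrite disjoints_subset setCD subsetUr.
    apply/trivIsetP=> B B'; rewrite !inE => /orP[]/eqP-> /orP[]/eqP->;
      rewrite ?eqxx // => _; by rewrite // disjoint_sym.
  + by rewrite !inE negb_or !(eq_sym set0) T0 AT0.
- by rewrite cards2 TAT.
- by move=> B; rewrite !inE => /orP[]/eqP->; split.
Qed.

Lemma eq_pair_xor (T : eqType) (a1 a2 b b' c : T) : a1 != a2 -> b != b' ->
  [&& (b == a1) || (b == a2), (b' == a1) || (b' == a2) & (c == a1) || (c == a2)] ->
  (c == b) != (c == b').
Proof.
move=> a12 bb' /and3P[hb hb' hc].
case/orP: hb bb' => /eqP->; case/orP: hb' => /eqP->; case/orP: hc => /eqP->;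
  by rewrite ?eqxx ?(eq_sym a2) ?(negbTE a12).
Qed.

Section DoubleMDSLines.
Variables (m : nat) (D : {set word m}).
Hypothesis lineD : forall x i, line_card D x i = 2.
Implicit Types (x : word m) (i : 'I_m) (a b : 'I_4) (E M : {set word m}).

Lemma double_code_fill_line E x i a0 : E \subset D -> double_code E ->
  upd x i a0 \in E -> forall a, (upd x i a \in E) = (upd x i a \in D).
Proof.
move=> ED /double_code_line_card /(_ x i) dE a0E.
have sub : [set a | upd x i a \in E] \subset [set a | upd x i a \in D].
  by apply/subsetP=> a; rewrite !inE => /(subsetP ED).
have cE : line_card E x i = 2.
  case: dE => // /eqP; rewrite cards_eq0 => /eqP/setP/(_ a0).
  by rewrite !inE a0E.
have /eqP/setP eqED : [set a | upd x i a \in E] == [set a | upd x i a \in D].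
  by rewrite eqEcard sub -/(line_card E x i) -/(line_card D x i) cE lineD.
by move=> a; move: (eqED a); rewrite !inE.
Qed.

Lemma double_code_split_lines E : E \subset D ->
  (forall x i, exists b : bool, forall a, (upd x i a \in E) = (upd x i a \in D) && b) ->
  double_code E /\ double_code (D :\: E).
Proof.
move=> ED constE.
suff cardE : forall x i, exists b : bool,
    line_card E x i = (if b then 2 else 0) /\ line_card (D :\: E) x i = (if b then 0 else 2).
  by split; apply/double_code_line_card=> x i;
    have [[] [cE cDE]] := cardE x i;
    rewrite ?cE ?cDE; by [left|right].
move=> x i; have [a1 [a2 [a12 Da]]] := card_pred_eq2P (lineD x i).
have [b Eb] := constE x i; exists b; rewrite /line_card.
case: b Eb => Eb; split.
- by apply: (card_pred_eq2 a12) => a; rewrite Eb andbT Da.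
- by apply: card_pred_eq0 => a; rewrite in_setD Eb andbT andNb.
- by apply: card_pred_eq0 => a; rewrite Eb andbF.
- by apply: (card_pred_eq2 a12) => a; rewrite in_setD Eb andbF Da.
Qed.

Definition agreement M M' := [set w in D | (w \in M) == (w \in M')].

Lemma agreement_split M M' : MDS_code M -> MDS_code M' -> M \subset D -> M' \subset D ->
  double_code (agreement M M') /\ double_code (D :\: agreement M M').
Proof.
move=> /MDS_code_line_card lineM /MDS_code_line_card lineM' MD M'D.
apply: double_code_split_lines => [|x i].
  by apply/subsetP=> w; rewrite inE => /andP[].
have [a1 [a2 [a12 Da]]] := card_pred_eq2P (lineD x i).
have [b Mb] := card_pred_eq1P (lineM x i).
have [b' Mb'] := card_pred_eq1P (lineM' x i).
have bD : (b == a1) || (b == a2) by rewrite -Da; apply: (subsetP MD); rewrite Mb.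
have b'D : (b' == a1) || (b' == a2) by rewrite -Da; apply: (subsetP M'D); rewrite Mb'.
exists (b == b') => c; rewrite inE Mb Mb' Da.
have [<-|bb'] := eqVneq b b'; first by rewrite eqxx andbT.
rewrite andbF; case cD : (_ || _) => //=; apply/negbTE.
by apply: eq_pair_xor a12 bb' _; rewrite bD b'D cD.
Qed.

End DoubleMDSLines.

Section Complement.
Variables (m : nat) (A E : {set word m}).
Hypothesis lineA : forall x i, line_card A x i = 2.
Hypothesis EAC : E \subset ~: A.
Hypothesis dE : double_code E.
Implicit Types (x : word m) (i j : 'I_m) (a b : 'I_4).

Lemma line_card_compl x i : line_card (~: A) x i = 2.
Proof. by rewrite line_cardC lineA. Qed.

Lemma fill_compl_line x i a0 :
  upd x i a0 \in E -> forall a, (upd x i a \in E) = (upd x i a \in ~: A).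
Proof. exact: (double_code_fill_line line_card_compl EAC dE). Qed.

Definition meets_line x j := [exists a, upd x j a \in E].

(* If the j-line through x meets E but the j-line through its A-neighbour
   x' = upd x i b does not, these two lines carry disjoint pairs of values
   outside A, none equal to x j: four values among the three others. *)
Lemma meets_line_step x i j b : x \in A -> upd x i b \in A -> b != x i -> j != i ->
  meets_line x j -> meets_line (upd x i b) j.
Proof.
move=> xA x'A bx ji /existsP[a0 a0E]; apply: contraT => x'E.
pose R0 := [set a | upd x j a \in ~: A].
pose R1 := [set a | upd (upd x i b) j a \in ~: A].
have disjR : R0 :&: R1 = set0.
  apply/setP=> a; rewrite !inE; apply/negP=> /andP[aR0 aR1].
  have yE : upd x j a \in E by rewrite (fill_compl_line a0E) inE.
  have y'E : upd (upd x j a) i (upd x j a i) \in E by rewrite upd_id.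
  have e : upd (upd x i b) j a = upd (upd x j a) i b by rewrite upd_comm // eq_sym.
  have : upd (upd x i b) j a \in E by rewrite e (fill_compl_line y'E) -e inE.
  by apply/negP; move: x'E; rewrite negb_exists => /forallP.
have sub : R0 :|: R1 \subset [set~ x j].
  apply/subsetP=> a; rewrite !inE => /orP[]; apply: contraL => /eqP->.
    by rewrite upd_id negbK.
  by rewrite -{1}(upd_neq x b ji) upd_id negbK.
have cR0 : #|R0| = 2 by apply: line_card_compl.
have cR1 : #|R1| = 2 by apply: line_card_compl.
by have := subset_leq_card sub; rewrite cardsU disjR cards0 cR0 cR1 cardsC1 card_ord.
Qed.

Lemma meets_line_upd x i j b : x \in A -> upd x i b \in A -> b != x i ->
  meets_line (upd x i b) j = meets_line x j.
Proof.
move=> xA x'A bx; have [->|ji] := eqVneq j i.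
  by apply/existsP/existsP=> -[a aE]; exists a; rewrite ?upd_upd in aE *.
apply/idP/idP; last exact: meets_line_step.
have {2}-> : x = upd (upd x i b) i (x i) by rewrite upd_upd upd_id.
by apply: meets_line_step; rewrite ?upd_upd ?upd_id ?upd_eq // eq_sym.
Qed.

Definition pattern_class x0 :=
  [set x in A | [forall j, meets_line x j == meets_line x0 j]].

Lemma pattern_class_split x0 :
  double_code (pattern_class x0) /\ double_code (A :\: pattern_class x0).
Proof.
apply: (double_code_split_lines lineA) => [|x i].
  by apply/subsetP=> y; rewrite inE => /andP[].
have [a1 [a2 [a12 Da]]] := card_pred_eq2P (lineA x i).
have a1A : upd x i a1 \in A by rewrite Da eqxx.
exists (upd x i a1 \in pattern_class x0) => c; rewrite Da.
have [/orP[]/eqP->|nc] := boolP ((c == a1) || (c == a2)) => //=; last first.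
  by rewrite inE Da (negbTE nc).
have a2A : upd x i a2 \in A by rewrite Da eqxx orbT.
rewrite !inE a1A a2A; apply: eq_forallb => j.
have <- : upd (upd x i a1) i a2 = upd x i a2 by rewrite upd_upd.
by rewrite meets_line_upd ?upd_upd ?upd_eq // eq_sym.
Qed.

Lemma prime_compl_split : 0 < m -> prime_code A -> E = set0 \/ E = ~: A.
Proof.
move=> m_gt0 pA; pose i0 := Ordinal m_gt0.
have [->|/set0Pn[e1 e1E]] := eqVneq E set0; first by left.
have [/eqP|/set0Pn[e2]] := eqVneq (~: A :\: E) set0.
  by rewrite setD_eq0 => AE; right; apply/eqP; rewrite eqEsubset EAC.
rewrite !inE => /andP[e2E e2A]; exfalso.
(* By primality all of A shares one meets_line pattern.  A point of A on the
   i0-line through e1 sees E along i0, hence so does the point of A on the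
   i0-line through e2; then that line meets ~: A only inside E, yet e2 \notin E. *)
have [x0 x0A] : exists x0, x0 \in A by case: pA => _ [/set0Pn].
have [dT dAT] := pattern_class_split x0.
have TA : pattern_class x0 \subset A by apply/subsetP=> y; rewrite inE => /andP[].
have x0T : x0 \in pattern_class x0 by rewrite inE x0A; apply/forallP.
have [T0|TA'] := prime_code_split pA TA dT dAT; first by rewrite T0 inE in x0T.
have meets_A y : y \in A -> meets_line y i0.
  have [a1 [a2 [_ Da]]] := card_pred_eq2P (lineA e1 i0).
  have y1A : upd e1 i0 a1 \in A by rewrite Da eqxx.
  move: (y1A); rewrite -{1}TA' => /setIdP[_ /forallP/(_ i0)/eqP p1].
  rewrite -TA' => /setIdP[_ /forallP/(_ i0)/eqP ->]; rewrite -p1.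
  by apply/existsP; exists (e1 i0); rewrite upd_upd upd_id.
have [b1 [b2 [_ Db]]] := card_pred_eq2P (lineA e2 i0).
have b1A : upd e2 i0 b1 \in A by rewrite Db eqxx.
have /existsP[a] := meets_A _ b1A; rewrite upd_upd => aE.
by move: (fill_compl_line aE (e2 i0)); rewrite upd_id (negbTE e2E) inE e2A.
Qed.

End Complement.

Section PrimeBlock.
Variables (n : nat) (K0 : {set 'I_n}) (A : {set word #|K0|}) (beta : word n -> bool)
  (C : {set word n}).
Hypothesis dA : double_MDS_code A.
Hypothesis pA : prime_code A.
Hypothesis CS : forall x, x \in C -> (subword x K0 \in A) (+) beta x.
Hypothesis beta_local :
  forall x y : word n, (forall i, i \notin K0 -> x i = y i) -> beta x = beta y.
Hypothesis MC : MDS_code C.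
Variables (k0 : 'I_n) (k0K0 : k0 \in K0).

Local Notation m := #|K0|.
Implicit Types (x z : word n) (w : word m) (t : 'I_m) (a : 'I_4) (b : bool).

Definition merge z w : word n :=
  [ffun i => if i \in K0 then w (enum_rank_in k0K0 i) else z i].

Lemma subword_merge z w : subword (merge z w) K0 = w.
Proof. by apply/ffunP=> t; rewrite !ffunE enum_valP enum_valK_in. Qed.

Lemma merge_subword z : merge z (subword z K0) = z.
Proof. by apply/ffunP=> i; rewrite !ffunE; case: ifP => // iK; rewrite enum_rankK_in. Qed.

Lemma merge_out z w i : i \notin K0 -> merge z w i = z i.
Proof. by rewrite ffunE => /negbTE->. Qed.

Lemma merge_upd z w t a : merge z (upd w t a) = upd (merge z w) (enum_val t) a.
Proof.
apply/ffunP=> i; rewrite !ffunE; case: (boolP (i \in K0)) => iK.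
  congr (if _ then _ else _); apply/eqP/eqP=> [<-|->]; last exact: enum_valK_in.
  by rewrite enum_rankK_in.
by case: eqP => // ei; move: iK; rewrite ei enum_valP.
Qed.

Lemma merge_upd_out z w l a : l \notin K0 -> merge (upd z l a) w = upd (merge z w) l a.
Proof.
move=> lK; apply/ffunP=> i; rewrite !ffunE; case: (boolP (i \in K0)) => // iK.
by case: eqP => // il; move: lK; rewrite -il iK.
Qed.

Definition slice z := [set w | merge z w \in C].

Lemma slice_MDS z : MDS_code (slice z).
Proof.
apply/MDS_code_line_card=> w t.
rewrite -((MDS_code_line_card C).1 MC (merge z w) (enum_val t)).
by apply: eq_card => a; rewrite !inE merge_upd.
Qed.

Definition layer b := if b then ~: A else A.

Lemma mem_layer b w : (w \in layer b) = (w \in A) (+) b.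
Proof. by case: b; rewrite /layer ?inE ?addbT ?addbF. Qed.

Lemma line_card_layer b w t : line_card (layer b) w t = 2.
Proof. by case: b; rewrite /layer ?line_cardC; rewrite (double_MDS_code_line_card A).1. Qed.

Lemma slice_sub_layer z : slice z \subset layer (beta z).
Proof.
apply/subsetP=> w; rewrite inE => /CS; rewrite subword_merge mem_layer.
have -> : beta (merge z w) = beta z by apply: beta_local => i; apply: merge_out.
by case: (w \in A); case: (beta z).
Qed.

Lemma layer_split b (T : {set word m}) : T \subset layer b -> double_code T ->
  double_code (layer b :\: T) -> T = set0 \/ T = layer b.
Proof.
case: b => /= TD dT dDT; last exact: prime_code_split.
have m_gt0 : 0 < m by apply/card_gt0P; exists k0.
exact: (prime_compl_split ((double_MDS_code_line_card A).1 dA) TD dT m_gt0 pA).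
Qed.

Lemma slice_dichotomy z z0 : beta z = beta z0 ->
  (forall w, w \in layer (beta z) -> (w \in slice z) = (w \in slice z0)) \/
  (forall w, w \in layer (beta z) -> (w \in slice z) = ~~ (w \in slice z0)).
Proof.
move=> bz; have sz := slice_sub_layer z; have sz0 := slice_sub_layer z0.
rewrite -bz in sz0.
have [dT dDT] :=
  agreement_split (@line_card_layer (beta z)) (slice_MDS z) (slice_MDS z0) sz sz0.
have TD : agreement (layer (beta z)) (slice z) (slice z0) \subset layer (beta z).
  by apply/subsetP=> w; rewrite inE => /andP[].
case: (layer_split TD dT dDT) => [/setP T0|/setP TD']; [right|left] => w wD.
  by move: (T0 w); rewrite !inE wD /=; case: (_ \in C); case: (_ \in C).
by move: (TD' w); rewrite !inE wD => /eqP.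
Qed.

Lemma slice_other_layer z b w : w \in layer b -> beta z != b -> w \notin slice z.
Proof.
move=> wD bz; apply/negP=> /(subsetP (slice_sub_layer z)); move: wD; rewrite !mem_layer.
by case: (beta z) b bz => -[] //= _; case: (w \in A).
Qed.

Definition t0 : 'I_m := enum_rank_in k0K0 k0.
Definition ref a : word m := upd (zero_word m) t0 a.

(* The reference t0-line through 0 meets each layer in two points, one in
   and one out of any slice of that layer; by [slice_dichotomy] some point
   of it has the same membership as w in every slice. *)
Lemma slice_representative w : exists a, forall z, (w \in slice z) = (ref a \in slice z).
Proof.
pose b := ~~ (w \in A).
have wD : w \in layer b by rewrite mem_layer /b; case: (w \in A).
have [a1 [a2 [a12 Da]]] := card_pred_eq2P (line_card_layer b (zero_word m) t0).
have [/existsP[z0 /eqP bz0]|] := boolP [exists z0, beta z0 == b]; last first.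
  rewrite negb_exists => /forallP nb; exists a1 => z.
  by rewrite !(negbTE (slice_other_layer _ (nb z))) // /ref Da eqxx.
have [c Cc] := card_pred_eq1P ((MDS_code_line_card _).1 (slice_MDS z0) (zero_word m) t0).
have cD : ref c \in layer b.
  by rewrite -bz0; apply: (subsetP (slice_sub_layer z0)); rewrite /ref Cc.
pose c' := if a1 == c then a2 else a1.
have c'D : ref c' \in layer b by rewrite /ref Da /c'; case: ifP; rewrite eqxx ?orbT.
have c'c : c' != c by rewrite /c'; case: ifP => [/eqP <-|/negbT //]; rewrite eq_sym.
exists (if w \in slice z0 then c else c') => z; set d := if _ then _ else _.
have dD : ref d \in layer b by rewrite /d; case: ifP.
have dz0 : (ref d \in slice z0) = (w \in slice z0).
  by rewrite /ref Cc /d; case: ifP; rewrite ?eqxx // (negbTE c'c).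
have [bz|bz] := eqVneq (beta z) b; last by rewrite !(negbTE (slice_other_layer _ bz)).
have bzz0 : beta z = beta z0 by rewrite bz bz0.
by case: (slice_dichotomy bzz0) => eqz; rewrite !eqz ?bz ?dz0.
Qed.

Definition inner w : 'I_4 :=
  odflt ord0 [pick a | [forall z, (w \in slice z) == (ref a \in slice z)]].

Lemma mem_slice_inner w z : (w \in slice z) = (ref (inner w) \in slice z).
Proof.
rewrite /inner; case: pickP => [a /forallP/(_ z)/eqP //|none].
have [a wa] := slice_representative w.
by have /forallP[] := negbT (none a); move=> z'; rewrite wa.
Qed.

Definition outer z : 'I_4 := odflt ord0 [pick a | ref a \in slice z].

Lemma mem_slice_ref z a : (ref a \in slice z) = (a == outer z).
Proof.
have [c Cc] := card_pred_eq1P ((MDS_code_line_card _).1 (slice_MDS z) (zero_word m) t0).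
rewrite /outer /ref; case: pickP => [b|none]; last by move: (none c); rewrite Cc eqxx.
by rewrite !Cc => /eqP->.
Qed.

Lemma mem_C_inner_outer x : (x \in C) = (inner (subword x K0) == outer x).
Proof. by rewrite -mem_slice_ref -mem_slice_inner inE merge_subword. Qed.

Lemma outer_local z z' : (forall i, i \notin K0 -> z i = z' i) -> outer z = outer z'.
Proof.
move=> zz'; suff eqs : slice z = slice z' by rewrite /outer eqs.
apply/setP=> w; rewrite !inE; congr (_ \in C); apply/ffunP=> i.
by rewrite !ffunE; case: ifP => // /negbT/zz'.
Qed.

Lemma inner_quasigroup l0 : l0 \notin K0 -> quasigroup inner.
Proof.
move=> l0K0 w t a b /= eab.
pose z := zero_word n.
have [c Cc] := card_pred_eq1P ((MDS_code_line_card _).1 MC (merge z (upd w t a)) l0).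
have aC : upd w t a \in slice (upd z l0 c) by rewrite inE merge_upd_out // Cc.
have bC : upd w t b \in slice (upd z l0 c) by rewrite mem_slice_inner -eab -mem_slice_inner.
exact: MDS_code_upd_inj (slice_MDS _) aC bC.
Qed.

Lemma outer_upd_inj z l : l \notin K0 -> injective (fun a => outer (upd z l a)).
Proof.
move=> lK0 a b /= eab.
have inC c : merge (upd z l c) (ref (outer (upd z l c))) \in C.
  by have := mem_slice_ref (upd z l c) (outer (upd z l c)); rewrite eqxx inE.
have := inC a; have := inC b; rewrite -eab !merge_upd_out // => bC aC.
exact: MDS_code_upd_inj MC aC bC.
Qed.

End PrimeBlock.

Lemma cardsC_ord n (K0 : {set 'I_n}) : #|~: K0| = n - #|K0|.
Proof. by rewrite cardsCs setCK card_ord. Qed.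

Lemma exists_block_perm n (K0 : {set 'I_n}) (Hm : #|K0| <= n)
    (Hc : #|~: K0| = n - #|K0|) : 0 < n ->
  exists sg : {perm 'I_n},
    (forall t, sg (widen_ord Hm t) = enum_val t) /\
    (forall t, sg (cast_ord (subnKC Hm) (rshift #|K0| t)) =
               enum_val (cast_ord (esym Hc) t)).
Proof.
move=> n_gt0; pose s := enum K0 ++ enum (~: K0).
have size_s : size s = n by rewrite size_cat -!cardE Hc subnKC.
have uniq_s : uniq s.
  by rewrite cat_uniq !enum_uniq andbT; apply/hasPn => i; rewrite !mem_enum inE.
pose f (u : 'I_n) := nth (Ordinal n_gt0) s u.
have f_inj : injective f.
  by move=> u v /eqP; rewrite nth_uniq ?size_s // => /eqP; apply: ord_inj.
exists (perm f_inj); split=> t; rewrite permE /f /= nth_cat -cardE.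
  by rewrite ltn_ord (enum_val_nth (Ordinal n_gt0)).
by rewrite ltnNge leq_addr /= addKn (enum_val_nth (Ordinal n_gt0)).
Qed.

Lemma decomposable_of_block n (K0 : {set 'I_n}) (g : word #|K0| -> 'I_4)
    (h : word n -> 'I_4) (C : {set word n}) :
  1 < #|K0| -> 1 < #|~: K0| -> quasigroup g ->
  (forall z z' : word n, (forall i, i \notin K0 -> z i = z' i) -> h z = h z') ->
  (forall (z : word n) l, l \notin K0 -> injective (fun a => h (upd z l a))) ->
  (forall x, (x \in C) = (g (subword x K0) == h x)) -> decomposable C.
Proof.
move=> m_gt1 mC_gt1 g_qg h_local h_inj memC.
have Hm : #|K0| <= n by rewrite -[n in _ <= n]card_ord max_card.
have [l0 l0K0] : exists l0, l0 \in ~: K0 by apply/card_gt0P; lia.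
have Hc := cardsC_ord K0.
have [sg [sg_l sg_r]] := exists_block_perm Hm Hc (leq_trans (ltnW m_gt1) Hm).
pose spread (v : word (n - #|K0|)) : word n :=
  [ffun i => if i \in K0 then ord0 else v (cast_ord Hc (enum_rank_in l0K0 i))].
have spread_upd v t a :
    spread (upd v t a) = upd (spread v) (enum_val (cast_ord (esym Hc) t)) a.
  apply/ffunP=> i; rewrite !ffunE; case: (boolP (i \in K0)) => iK.
    case: eqP => // ei; have := enum_valP (cast_ord (esym Hc) t).
    by rewrite -ei inE iK.
  have iK' : i \in ~: K0 by rewrite inE.
  congr (if _ then _ else _); apply/eqP/eqP=> [<-|->].
    by rewrite cast_ordK enum_rankK_in.
  by rewrite enum_valK_in cast_ordKV.
exists #|K0|, Hm; split; first by apply/andP; split=> //; rewrite Hc in mC_gt1; lia.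
exists g, (fun v => h (spread v)), sg; split=> //.
- move=> v t a b /=; rewrite !spread_upd; apply: h_inj.
  by have := enum_valP (cast_ord (esym Hc) t); rewrite inE.
- apply/setP=> x; rewrite inE memC; congr (g _ == _).
    by apply/ffunP=> t; rewrite !ffunE sg_l.
  apply: h_local => i iK; have iK' : i \in ~: K0 by rewrite inE.
  by rewrite !ffunE (negbTE iK) sg_r cast_ordK enum_rankK_in.
Qed.

Section Partition.
Variables (n k : nat) (K : 'I_k -> {set 'I_n}).
Hypothesis K_neq0 : forall j, K j != set0.
Hypothesis K_disj : forall j1 j2, j1 != j2 -> [disjoint K j1 & K j2].
Hypothesis K_cover : forall i : 'I_n, exists j, i \in K j.

Definition rep j := xchoose (set0Pn _ (K_neq0 j)).

Lemma rep_mem j : rep j \in K j.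
Proof. exact: xchooseP. Qed.

Lemma block_uniq i j j' : i \in K j -> i \in K j' -> j = j'.
Proof.
move=> ij ij'; apply/eqP; apply: contraT => jj'.
by have := disjointFr (K_disj jj') ij; rewrite ij'.
Qed.

Lemma rep_inj : injective rep.
Proof. by move=> j j' e; apply: (block_uniq (rep_mem j)); rewrite e rep_mem. Qed.

Lemma exists_large_block : k < n -> exists j, 1 < #|K j|.
Proof.
move=> kn; apply/existsP; apply: contraLR kn; rewrite negb_exists -leqNgt => /forallP small.
pose block i := xchoose (K_cover i).
have block_inj : injective block.
  move=> i i' e; have := xchooseP (K_cover i'); rewrite -/(block i') -e => i'K.
  have := small (block i); rewrite -leqNgt => /card_le1_eqP; apply=> //.
  exact: (xchooseP (K_cover i)).
by have := leq_card _ block_inj; rewrite !card_ord.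
Qed.

Lemma card_block_le_setC j j' : j != j' -> #|K j'| <= #|~: K j|.
Proof.
move=> jj'; apply: subset_leq_card; apply/subsetP=> i iK.
by rewrite inE (disjointFl (K_disj jj') iK).
Qed.

Lemma card_setC_block j : k.-1 <= #|~: K j|.
Proof.
have sub : rep @: [set~ j] \subset ~: K j.
  apply/subsetP=> _ /imsetP[j' jj' ->]; rewrite inE; apply/negP=> jK.
  by move: jj'; rewrite !inE (block_uniq jK (rep_mem j')) eqxx.
by have := subset_leq_card sub; rewrite (card_imset _ rep_inj) cardsC1 card_ord.
Qed.

Lemma exists_balanced_block : (2 < k < n) \/ (k = 2 /\ forall j, 1 < #|K j|) ->
  exists j, 1 < #|K j| /\ 1 < #|~: K j|.
Proof.
case=> [/andP[k_gt2 kn]|[k2 K_gt1]].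
  have [j Kj] := exists_large_block kn; exists j; split=> //.
  by apply: leq_trans _ (card_setC_block j); lia.
have k_gt1 : 1 < k by rewrite k2.
exists (Ordinal (ltnW k_gt1)); split=> //.
by apply: leq_trans (K_gt1 (Ordinal k_gt1)) _; apply: card_block_le_setC.
Qed.

End Partition.

Lemma semilinear_of_singleton_blocks n (S : {set word n}) (K : 'I_n -> {set 'I_n})
    (Sj : forall j, {set word #|K j|}) (s0 : bool) (C : {set word n}) :
  canonical_repr S Sj s0 -> double_MDS_code S -> C \subset S -> semilinear C.
Proof.
case=> /andP[n_gt0 _] [K_neq0 K_disj] _ _ memS dS CS.
pose r := rep K_neq0; have r_inj : injective r := rep_inj K_disj.
have Kr j i : (i \in K j) = (i == r j).
  apply/idP/eqP=> [iK|->]; last exact: rep_mem.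
  have /codomP[j' ij'] := inj_card_onto r_inj (leqnn _) i.
  by rewrite ij' in iK *; rewrite (block_uniq K_disj iK (rep_mem K_neq0 j')).
have subwordK y j : subword y (K j) = [ffun => y (r j)].
  by apply/ffunP=> t; rewrite !ffunE; move: (enum_valP t); rewrite Kr => /eqP->.
pose i0 := Ordinal n_gt0.
exists S; split=> //.
exists (fun i a => ([ffun => a] \in Sj (invF r_inj i)) (+) ((i == i0) && s0)) => y.
rewrite memS big_split /=; congr (_ (+) _).
  by rewrite [in RHS](reindex_inj r_inj); apply: eq_bigr => j _; rewrite invF_f subwordK.
by rewrite (bigD1 i0) //= big1 ?addbF // => i /negbTE->.
Qed.

Lemma decomposable_of_canonical_block n (S : {set word n}) k (K : 'I_k -> {set 'I_n})
    (Sj : forall j, {set word #|K j|}) (s0 : bool) (C : {set word n}) (j0 : 'I_k) :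
  canonical_repr S Sj s0 -> MDS_code C -> C \subset S ->
  1 < #|K j0| -> 1 < #|~: K j0| -> decomposable C.
Proof.
case=> _ [_ K_disj] _ /(_ j0)[dA [pA _]] memS MC CS K_gt1 KC_gt1.
have [k0 k0K] : exists k0, k0 \in K j0 by apply/card_gt0P; lia.
have [l0] : exists l0, l0 \in ~: K j0 by apply/card_gt0P; lia.
rewrite inE => l0K.
pose beta x := \big[addb/false]_(j < k | j != j0) (subword x (K j) \in Sj j) (+) s0.
have CS' x : x \in C -> (subword x (K j0) \in Sj j0) (+) beta x.
  by move/(subsetP CS); rewrite memS (bigD1 j0) //= addbA.
have beta_local (x y : word n) : (forall i, i \notin K j0 -> x i = y i) -> beta x = beta y.
  move=> xy; congr (_ (+) _); apply: eq_bigr => j jj0.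
  suff -> : subword x (K j) = subword y (K j) by [].
  by apply/ffunP=> t; rewrite !ffunE xy // (disjointFr (K_disj _ _ jj0) (enum_valP t)).
have memC := mem_C_inner_outer dA pA CS' beta_local MC k0K.
apply: (decomposable_of_block K_gt1 KC_gt1 _ (outer_local C k0K)
          (outer_upd_inj (k0K0 := k0K) MC) memC).
exact: (inner_quasigroup dA pA CS' beta_local MC (k0K0 := k0K) l0K).
Qed.

Theorem corollary5 (n : nat) (S : {set word n}) (k : nat) (K : 'I_k -> {set 'I_n})
  (C : {set word n}) :
  double_MDS_code S -> has_canonical_parameters S K ->
  MDS_code C -> C \subset S ->
  ( ((2 < k < n) \/ (k = 2 /\ forall j : 'I_k, 1 < #|K j|)) -> decomposable C )
  /\ ( k = n -> semilinear C ).
Proof.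
move=> dS [Sj [s0 repS]] MC CS; split=> [k_cases|kn].
  have [_ [K_neq0 K_disj] K_cover _ _] := repS.
  have [j0 [K_gt1 KC_gt1]] := exists_balanced_block K_neq0 K_disj K_cover k_cases.
  exact: decomposable_of_canonical_block repS MC CS K_gt1 KC_gt1.
by subst k; apply: semilinear_of_singleton_blocks repS dS CS.
Qed.
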